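(* Let $\{X_\gamma\}_{\gamma\in\Gamma}$ be a family of strictly convex real Banach spaces such that $|\Gamma|\geq 2$ and, for every $\gamma$, $\dim(X_\gamma)\geq 2$ and $Sm(X_\gamma)$ is norm dense in $S_{X_\gamma}$. Let $Z$ denote either $Z_0=\bigoplus^{c_0}_{\gamma\in\Gamma}X_\gamma$ or $Z_\infty=\bigoplus^{\ell_\infty}_{\gamma\in\Gamma}X_\gamma$. Let $Y$ be a real Banach space and $\Delta:S_Z\to S_Y$ a surjective isometry such that for every $\gamma\in\Gamma$ and $x\in S_{X_\gamma}$ the restriction of $\Delta$ to $A(\gamma,x)$ is affine. Then $$\psi(\Delta(z))=\varphi_x(z(\gamma))$$ for all $\gamma\in\Gamma$, all $x\in Sm(X_\gamma)$, all $\psi\in\mathrm{supp}(\gamma,x)$, and all $z\in S_Z$ such that $\|z(\gamma')\|=1$ for some $\gamma'\neq\gamma$.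
   Context: All Banach spaces are real. $Z_\infty$ is the space of families $z=(z(\gamma))_{\gamma\in\Gamma}$, $z(\gamma)\in X_\gamma$, with $\|z\|=\sup_\gamma\|z(\gamma)\|<\infty$; $Z_0$ is its closed subspace of families with $\{\gamma:\|z(\gamma)\|>\varepsilon\}$ finite for all $\varepsilon>0$. A Banach space is strictly convex if every point of its unit sphere is an extreme point of its closed unit ball. $x\in S_X$ is a smooth point if there is a unique $f\in S_{X^*}$ with $f(x)=1$; $Sm(X)$ is the set of smooth points and, for $x\in Sm(X)$, $\varphi_x$ denotes that unique functional. For $\gamma\in\Gamma$ and $x\in S_{X_\gamma}$, $A(\gamma,x)=\{z\in S_Z: z(\gamma)=x\}$ (a convex set), and $\mathrm{supp}(\gamma,x)=\{\psi\in S_{Y^*}:\psi^{-1}(\{1\})\cap B_Y=\Delta(A(\gamma,x))\}$. ''The restriction of $\Delta$ to $A(\gamma,x)$ is affine'' means $\Delta(\alpha a+(1-\alpha)b)=\alpha\Delta(a)+(1-\alpha)\Delta(b)$ for all $a,b\in A(\gamma,x)$, $\alpha\in[0,1]$. *)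

From HB Require Import structures.
From mathcomp Require Import all_boot all_order all_algebra.
From mathcomp Require Import all_classical all_reals.
From mathcomp Require Import topology normedtype.
Set Implicit Arguments. Unset Strict Implicit. Unset Printing Implicit Defensive.
Import Order.TTheory GRing.Theory Num.Theory.
Import numFieldNormedType.Exports.
Local Open Scope classical_set_scope.
Local Open Scope ring_scope.

Section Defs.
Variable R : realType.

Section Space.
Variable X : normedModType R.

Definition unit_ball : set X := [set x | `|x| <= 1].
Definition unit_sphere : set X := [set x | `|x| = 1].

Definition extreme_point_ball (x : X) : Prop :=
  unit_ball x /\
  forall (y z : X) (t : R), unit_ball y -> unit_ball z -> 0 < t < 1 ->
    x = t *: y + (1 - t) *: z -> y = z.

Definition strictly_convex : Prop :=
  forall x : X, unit_sphere x -> extreme_point_ball x.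

Definition dim_ge2 : Prop :=
  exists u v : X, forall a b : R, a *: u + b *: v = 0 -> a = 0 /\ b = 0.

Definition is_functional (f : X -> R) : Prop :=
  (forall (a : R) (u v : X), f (a *: u + v) = a * f u + f v) /\ continuous f.

Definition dual_norm (f : X -> R) : R := sup [set `|f x| | x in unit_ball].

Definition dual_sphere (f : X -> R) : Prop := is_functional f /\ dual_norm f = 1.

Definition smooth_point (x : X) : Prop :=
  unit_sphere x /\ exists! f : X -> R, dual_sphere f /\ f x = 1.

Definition Sm : set X := [set x | smooth_point x].

End Space.

Section Sum.
Variables (Γ : Type) (X : Γ -> normedModType R).

Definition fam := forall g : Γ, X g.

Definition fadd (a b : fam) : fam := fun g => a g + b g.
Definition fscale (t : R) (a : fam) : fam := fun g => t *: a g.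
Definition fsub (a b : fam) : fam := fun g => a g - b g.

Definition fam_bounded (z : fam) : Prop := exists M : R, forall g, `|z g| <= M.
Definition fam_c0 (z : fam) : Prop :=
  forall e : R, 0 < e -> finite_set [set g | e < `|z g|].

(* membership in Z: c0 = true gives Z_0, c0 = false gives Z_infty *)
Definition inZ (c0 : bool) (z : fam) : Prop :=
  fam_bounded z /\ (if c0 then fam_c0 z else True).

Definition znorm (z : fam) : R := sup (range (fun g => `|z g|)).

Definition SZ (c0 : bool) : set fam := [set z | inZ c0 z /\ znorm z = 1].

Definition Aset (c0 : bool) (g : Γ) (x : X g) : set fam :=
  [set z | SZ c0 z /\ z g = x].

End Sum.

Definition surj_isometry_spheres (Γ : Type) (X : Γ -> normedModType R)
  (c0 : bool) (Y : normedModType R) (D : fam X -> Y) : Prop :=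
  (forall z, SZ c0 z -> @unit_sphere Y (D z)) /\
  (forall z w, SZ c0 z -> SZ c0 w -> `|D z - D w| = znorm (fsub z w)) /\
  (forall y, @unit_sphere Y y -> exists2 z, SZ c0 z & D z = y).

Definition affine_on_A (Γ : Type) (X : Γ -> normedModType R)
  (c0 : bool) (Y : normedModType R) (D : fam X -> Y) (g : Γ) (x : X g) : Prop :=
  forall a b, Aset c0 x a -> Aset c0 x b -> forall t : R, 0 <= t <= 1 ->
    D (fadd (fscale t a) (fscale (1 - t) b)) = t *: D a + (1 - t) *: D b.

Definition supp (Γ : Type) (X : Γ -> normedModType R)
  (c0 : bool) (Y : normedModType R) (D : fam X -> Y) (g : Γ) (x : X g)
  (psi : Y -> R) : Prop :=
  dual_sphere psi /\
  [set y | psi y = 1] `&` @unit_ball Y = D @` Aset c0 x.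

End Defs.
Arguments unit_ball {R} X _.
Arguments unit_sphere {R} X _.
Arguments Sm {R} X _.

From HB Require Import structures.
From mathcomp Require Import all_boot all_order all_algebra.
From mathcomp Require Import all_classical all_reals.
From mathcomp Require Import topology normedtype.
From mathcomp Require Import ring lra.
Import Order.TTheory GRing.Theory Num.Theory.
Import numFieldNormedType.Exports.
Local Open Scope classical_set_scope.
Local Open Scope ring_scope.
Set Implicit Arguments. Unset Strict Implicit. Unset Printing Implicit Defensive.

(** Fix z and a coordinate g' <> g with ||z g'|| = 1.  Replacing the g-th
    coordinate of z by any v in the unit ball of X_g keeps us inside the face
    A(g', z g'), on which D is affine; hence h v := psi (D (z with v at g)) is
    affine and 1-Lipschitz on the unit ball, and h x = 1 by the choice of psi.
    Also h (-x) = -1: for b in A(g, -x) pick p with D p = - D b and let b' be p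
    with -x at g.  As D is affine on A(g, -x), the midpoint of D b and D b' is
    a unit vector, so ||p g + x|| = ||D p - D b'|| = 2, and strict convexity
    forces p g = x, i.e. psi (D p) = 1.  Thus h is odd, extends to a norm-one
    functional taking the value 1 at x, and smoothness of x identifies it with
    phi. *)

Section NormedFacts.
Variable R : realType.

Lemma onem_half : 1 - 2^-1 = 2^-1 :> R.
Proof. lra. Qed.

Lemma half_itv : 0 <= (2^-1 : R) <= 1.
Proof. apply/andP; split; lra. Qed.

Lemma sup_range_attained (I : Type) (f : I -> R) (i0 : I) (M : R) :
  (forall i, f i <= M) -> f i0 = M -> sup (range f) = M.
Proof.
move=> f_le f_i0; apply/le_anti/andP; split.
  by apply: ge_sup; [exists (f i0); exists i0 | move=> _ [i _ <-]].
rewrite -f_i0; apply: ub_le_sup; last by exists i0.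
by exists M => _ [i _ <-].
Qed.

Lemma lipschitz1_continuous (V : normedModType R) (f : V -> R) :
  (forall a b, `|f a - f b| <= `|a - b|) -> continuous f.
Proof.
move=> f_lip x; apply/cvgrPdist_lt => e e0.
near=> y; apply: le_lt_trans (f_lip x y) _.
near: y; exact: cvgr_dist_lt.
Unshelve. all: by end_near.
Qed.

Section Functional.
Variables (V : normedModType R) (f : V -> R).
Hypothesis f_lin : is_functional f.

Lemma functional0 : f 0 = 0.
Proof.
case: f_lin => lin _; have := lin 1 0 0; rewrite scale1r addr0 mul1r => f00.
by apply: (@addrI _ (f 0)); rewrite addr0 -f00.
Qed.

Lemma functionalZ a u : f (a *: u) = a * f u.
Proof. by case: f_lin => lin _; rewrite -[a *: u]addr0 lin functional0 addr0. Qed.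

Lemma functionalD u v : f (u + v) = f u + f v.
Proof. by case: f_lin => lin _; have := lin 1 u v; rewrite scale1r mul1r. Qed.

Lemma functionalN u : f (- u) = - f u.
Proof. by rewrite -scaleN1r functionalZ mulN1r. Qed.

Lemma functionalB u v : f (u - v) = f u - f v.
Proof. by rewrite functionalD functionalN. Qed.

End Functional.

Lemma dual_sphere_le_norm (V : normedModType R) (f : V -> R) :
  dual_sphere f -> forall y, `|f y| <= `|y|.
Proof.
move=> [f_lin f_norm] y.
set S := [set `|f x| | x in unit_ball V].
have S_sup : has_sup S.
  apply: contrapT => /sup_out; rewrite /dual_norm -/S in f_norm => S0.
  by move: f_norm; rewrite S0 => /eqP; rewrite eq_sym oner_eq0.
have [->|y0] := eqVneq y 0; first by rewrite functional0 // !normr0.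
have ny : 0 < `|y| by rewrite normr_gt0.
have : S `|f (`|y|^-1 *: y)|.
  exists (`|y|^-1 *: y) => //; rewrite /unit_ball /= normrZ normfV normr_id.
  by rewrite mulVf // gt_eqF.
move/(sup_upper_bound S_sup); rewrite -/S [sup S]f_norm functionalZ //.
by rewrite normrM normfV normr_id ler_pdivrMl // mulr1.
Qed.

Lemma smooth_point_dual_uniq (V : normedModType R) (x : V) (f f' : V -> R) :
  Sm V x -> dual_sphere f -> f x = 1 -> dual_sphere f' -> f' x = 1 -> f = f'.
Proof.
move=> [_ [f0 [_ f0_uniq]]] f_dual fx f'_dual f'x.
by rewrite -(f0_uniq _ (conj f_dual fx)) (f0_uniq _ (conj f'_dual f'x)).
Qed.

End NormedFacts.

Section BallAffineExtension.
Variables (R : realType) (V : normedModType R) (h : V -> R).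
Hypothesis h_affine : forall (v w : V) (t : R), `|v| <= 1 -> `|w| <= 1 ->
  0 <= t <= 1 -> h (t *: v + (1 - t) *: w) = t * h v + (1 - t) * h w.
Hypothesis h0 : h 0 = 0.
Hypothesis h_le_norm : forall v : V, `|v| <= 1 -> `|h v| <= `|v|.

Let h_scale (v : V) (t : R) : `|v| <= 1 -> 0 <= t <= 1 -> h (t *: v) = t * h v.
Proof.
move=> v1 t01; have := h_affine (w := 0) v1; rewrite normr0 ler01 => /(_ _ isT t01).
by rewrite scaler0 addr0 h0 mulr0 addr0.
Qed.

Let h_opp (v : V) : `|v| <= 1 -> h (- v) = - h v.
Proof.
move=> v1; have := h_affine (t := 2^-1) (v := v) (w := - v).
rewrite onem_half scalerN addrN h0 normrN v1 => /(_ isT isT (half_itv R)) hv.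
lra.
Qed.

Let scale_into_ball (v : V) (s : R) : 0 < s -> `|v| <= s -> `|s^-1 *: v| <= 1.
Proof.
move=> s0 vs; rewrite normrZ gtr0_norm ?invr_gt0 // mulrC ler_pdivrMr //.
by rewrite mul1r.
Qed.

(* The radius [|v| + 1] rather than [|v|] avoids dividing by zero at [v = 0]. *)
Definition ball_ext (v : V) : R := (`|v| + 1) * h ((`|v| + 1)^-1 *: v).

Let rescale_invariant (v : V) (s s' : R) : 0 < s -> s <= s' -> `|v| <= s ->
  s' * h (s'^-1 *: v) = s * h (s^-1 *: v).
Proof.
move=> s0 ss' vs; have s'0 : 0 < s' by exact: lt_le_trans ss'.
have -> : s'^-1 *: v = (s / s') *: (s^-1 *: v).
  by rewrite scalerA; congr (_ *: _); field; apply/andP; split; lra.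
rewrite h_scale ?scale_into_ball //; last first.
  by apply/andP; split; [rewrite divr_ge0 // ltW | rewrite ler_pdivrMr // mul1r].
field; lra.
Qed.

Lemma ball_extS (v : V) (s : R) : 0 < s -> `|v| <= s -> ball_ext v = s * h (s^-1 *: v).
Proof.
move=> s0 vs; rewrite /ball_ext; have r0 : 0 < `|v| + 1 by rewrite ltr_pwDr.
have [sr|rs] := lerP s (`|v| + 1); first by rewrite (rescale_invariant s0 sr vs).
by rewrite (rescale_invariant r0 (ltW rs)) // lerDl.
Qed.

Lemma ball_extE (v : V) : `|v| <= 1 -> ball_ext v = h v.
Proof. by move=> v1; rewrite (ball_extS ltr01 v1) invr1 scale1r mul1r. Qed.

Lemma ball_ext_le_norm (v : V) : `|ball_ext v| <= `|v|.
Proof.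
have r0 : 0 < `|v| + 1 by rewrite ltr_pwDr.
have v_ball : `|(`|v| + 1)^-1 *: v| <= 1 by rewrite scale_into_ball ?lerDl.
rewrite /ball_ext normrM gtr0_norm //.
rewrite (le_trans (ler_wpM2l (ltW r0) (h_le_norm v_ball))) //.
by rewrite normrZ gtr0_norm ?invr_gt0 // mulrA mulfV ?gt_eqF // mul1r.
Qed.

Let ball_extD (u v : V) : ball_ext (u + v) = ball_ext u + ball_ext v.
Proof.
set r := `|u| + `|v| + 1.
have nu := normr_ge0 u; have nv := normr_ge0 v.
have r0 : 0 < r by rewrite /r; lra.
have ur : `|u| <= r by rewrite /r; lra.
have vr : `|v| <= r by rewrite /r; lra.
have uvr : `|u + v| <= 2 * r by apply: (le_trans (ler_normD _ _)); rewrite /r; lra.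
rewrite (ball_extS (s := 2 * r)) ?mulr_gt0 // (ball_extS r0 ur) (ball_extS r0 vr).
have -> : (2 * r)^-1 *: (u + v) =
    2^-1 *: (r^-1 *: u) + (1 - 2^-1) *: (r^-1 *: v).
  by rewrite onem_half !scalerA -scalerDr invfM.
by rewrite h_affine ?scale_into_ball ?half_itv // onem_half; field.
Qed.

Let ball_extN (u : V) : ball_ext (- u) = - ball_ext u.
Proof.
rewrite /ball_ext normrN scalerN h_opp ?mulrN //.
by apply: scale_into_ball; [rewrite ltr_pwDr | rewrite lerDl].
Qed.

Let ball_extZ_ge0 (a : R) (u : V) : 0 <= a -> ball_ext (a *: u) = a * ball_ext u.
Proof.
move=> a0; have [->|an0] := eqVneq a 0.
  by rewrite scale0r mul0r (ball_extS ltr01) ?normr0 // scaler0 h0 mulr0.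
have ap : 0 < a by rewrite lt0r an0.
set r := (a + 1) * (`|u| + 1).
have r0 : 0 < r by rewrite /r mulr_gt0 // ltr_pwDr.
have aur : `|a *: u| <= r.
  by rewrite normrZ ger0_norm // /r; apply: ler_pM => //; rewrite lerDl.
have ur : `|u| <= r / a.
  by rewrite ler_pdivlMr // /r mulrC; apply: ler_pM => //; rewrite lerDl.
rewrite (ball_extS r0 aur) (ball_extS (s := r / a)) ?divr_gt0 //.
by rewrite scalerA invf_div [r^-1 * a]mulrC mulrA; congr (_ * _); field.
Qed.

Lemma ball_ext_dual_sphere (x : V) : `|x| = 1 -> h x = 1 -> dual_sphere ball_ext.
Proof.
move=> x1 hx; have ball_ext_lin : is_functional ball_ext.
  split=> [a u v|].
    rewrite ball_extD; congr (_ + _).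
    have [a0|a0] := lerP 0 a; first exact: ball_extZ_ge0.
    by rewrite -[a]opprK scaleNr ball_extN ball_extZ_ge0 ?mulNr // oppr_ge0 ltW.
  apply: lipschitz1_continuous => a b.
  rewrite -ball_extN -ball_extD; exact: ball_ext_le_norm.
split=> //; rewrite /dual_norm.
have ub : ubound [set `|ball_ext y| | y in unit_ball V] 1.
  by move=> _ [y y1 <-]; exact: le_trans (ball_ext_le_norm y) y1.
have x_ball : unit_ball V x by rewrite /unit_ball /= x1.
apply/le_anti/andP; split.
  by apply: ge_sup => //; exists `|ball_ext x|; exists x.
have : [set `|ball_ext y| | y in unit_ball V] `|ball_ext x| by exists x.
by move/(ub_le_sup (ex_intro _ 1 ub)); rewrite ball_extE ?x1 // hx normr1.
Qed.

End BallAffineExtension.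

Section FamilyUpdate.
Variables (R : realType) (Γ : Type) (X : Γ -> normedModType R).

Definition fupd (z : fam X) (γ : Γ) (v : X γ) : fam X := fun g =>
  match pselect (γ = g) with
  | left e => eq_rect γ X v g e
  | right _ => z g
  end.
Arguments fupd z {γ} v _.

Lemma fupd_eq (z : fam X) γ (v : X γ) : fupd z v γ = v.
Proof.
rewrite /fupd; case: pselect => [e|//].
by rewrite (Prop_irrelevance e erefl).
Qed.

Lemma fupd_neq (z : fam X) γ (v : X γ) g : g <> γ -> fupd z v g = z g.
Proof. by rewrite /fupd; case: pselect => // e /(_ (esym e)). Qed.

Lemma fupd_id (z : fam X) γ : fupd z (z γ) = z.
Proof.
apply: functional_extensionality_dep => g.
have [e|n] := pselect (γ = g); first by case: g / e; rewrite fupd_eq.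
by rewrite fupd_neq // => e; apply: n.
Qed.

Lemma fupd_comb (z : fam X) γ (v w : X γ) (t : R) :
  fadd (fscale t (fupd z v)) (fscale (1 - t) (fupd z w)) =
  fupd z (t *: v + (1 - t) *: w).
Proof.
apply: functional_extensionality_dep => g; rewrite /fadd /fscale.
have [e|n] := pselect (γ = g); first by case: g / e; rewrite !fupd_eq.
have ng : g <> γ by move=> e; apply: n.
by rewrite !fupd_neq // -scalerDl addrC subrK scale1r.
Qed.

Lemma SZ_norm_le1 c0 (z : fam X) : SZ c0 z -> forall g, `|z g| <= 1.
Proof.
move=> [[[M M_ub] _] z1] g; rewrite -z1; apply: ub_le_sup; last by exists g.
by exists M => _ [i _ <-].
Qed.

Lemma znorm_fsub_single (a b : fam X) γ :
  (forall g, g <> γ -> a g = b g) -> znorm (fsub a b) = `|a γ - b γ|.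
Proof.
move=> ab; apply: (@sup_range_attained R _ _ γ) => // g.
have [e|n] := pselect (γ = g); first by case: g / e.
by rewrite /fsub ab ?subrr ?normr0 // => e; apply: n.
Qed.

Lemma fupd_SZ c0 (z : fam X) γ (v : X γ) g1 : SZ c0 z -> `|v| <= 1 ->
  `|fupd z v g1| = 1 -> SZ c0 (fupd z v).
Proof.
move=> z_SZ v1 z_g1.
have le1 g : `|fupd z v g| <= 1.
  have [e|n] := pselect (γ = g); first by case: g / e; rewrite fupd_eq.
  by rewrite fupd_neq ?(SZ_norm_le1 z_SZ) // => e; apply: n.
split; last exact: (@sup_range_attained R _ _ g1).
split; first by exists 1.
case: c0 z_SZ => // -[[_ z_c0] _] e e0.
apply: (@sub_finite_set _ _ ([set g | e < `|z g|] `|` [set γ])).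
  move=> g /=; have [->|n] := pselect (g = γ); first by right.
  by rewrite fupd_neq //; left.
by rewrite finite_setU; split; [exact: z_c0 | exact: finite_set1].
Qed.

Lemma Aset_convex c0 γ (y : X γ) (a b : fam X) (t : R) : `|y| = 1 ->
  Aset c0 y a -> Aset c0 y b -> 0 <= t <= 1 ->
  Aset c0 y (fadd (fscale t a) (fscale (1 - t) b)).
Proof.
move=> y1 [a_SZ a_y] [b_SZ b_y] /andP[t0 t1].
have t1' : 0 <= 1 - t by rewrite subr_ge0.
have comb_y : fadd (fscale t a) (fscale (1 - t) b) γ = y.
  by rewrite /fadd /fscale a_y b_y -scalerDl addrC subrK scale1r.
have comb_le e g : `|a g| <= e -> `|b g| <= e ->
    `|fadd (fscale t a) (fscale (1 - t) b) g| <= e.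
  move=> ae be; apply: (le_trans (ler_normD _ _)); rewrite !normrZ !ger0_norm //.
  apply: (@le_trans _ _ (t * e + (1 - t) * e)).
    by apply: lerD; apply: ler_wpM2l.
  by rewrite -mulrDl addrC subrK mul1r.
have comb_le1 g : `|fadd (fscale t a) (fscale (1 - t) b) g| <= 1.
  by apply: comb_le; [exact: SZ_norm_le1 a_SZ g | exact: SZ_norm_le1 b_SZ g].
split=> //; split; last by apply: (sup_range_attained (i0 := γ) comb_le1); rewrite comb_y.
split; first by exists 1.
case: c0 a_SZ b_SZ {comb_y a_y b_y} => // -[[_ a_c0] _] -[[_ b_c0] _] e e0.
apply: (@sub_finite_set _ _ ([set g | e < `|a g|] `|` [set g | e < `|b g|])).
  move=> g /=; apply: contraPP => /not_orP[/negP]; rewrite -leNgt => ae /negP.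
  by rewrite -leNgt => be; apply/negP; rewrite -leNgt comb_le.
by rewrite finite_setU; split; [exact: a_c0 | exact: b_c0].
Qed.

End FamilyUpdate.

Section SphereIsometry.
Variables (R : realType) (Γ : Type) (X : Γ -> normedModType R) (c0 : bool).
Variables (Y : normedModType R) (D : fam X -> Y).
Hypothesis D_iso : surj_isometry_spheres c0 D.
Hypothesis D_affine : forall g (x : X g), unit_sphere (X g) x -> affine_on_A c0 D x.

Variables (g : Γ) (x : X g).
Hypothesis x_sphere : `|x| = 1.

Lemma Aset_opp_antipode (b p : fam X) : strictly_convex (X g) ->
  Aset c0 (- x) b -> SZ c0 p -> D p = - D b -> p g = x.
Proof.
move=> X_sc b_A p_SZ Dp; case: D_iso => D_sphere [D_dist _].
have nx_sphere : `|- x| = 1 by rewrite normrN.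
pose b' := fupd p (- x).
have b'_A : Aset c0 (- x) b'.
  split; last exact: fupd_eq.
  by apply: (fupd_SZ (g1 := g)) => //; rewrite ?fupd_eq nx_sphere.
have mid_A := Aset_convex nx_sphere b_A b'_A (half_itv R).
have p_b'_dist : `|D p - D b'| = 2.
  rewrite Dp -opprD normrN.
  have -> : D b + D b' = 2 *: D (fadd (fscale 2^-1 b) (fscale (1 - 2^-1) b')).
    rewrite (D_affine nx_sphere b_A b'_A (half_itv R)) onem_half -scalerDr.
    by rewrite scalerA mulfV ?scale1r // pnatr_eq0.
  by rewrite normrZ (D_sphere _ mid_A.1) mulr1 ger0_norm.
have p_b'_znorm : znorm (fsub p b') = `|p g + x|.
  rewrite (znorm_fsub_single (γ := g)) /b' ?fupd_eq ?opprK // => g0 g0g.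
  by rewrite fupd_neq.
have pgx_dist : `|p g + x| = 2 by rewrite -p_b'_znorm -D_dist //; case: b'_A.
have mid_sphere : unit_sphere (X g) (2^-1 *: p g + (1 - 2^-1) *: x).
  rewrite /unit_sphere /= onem_half -scalerDr normrZ pgx_dist gtr0_norm.
    by field.
  by lra.
have [_ extreme] := X_sc _ mid_sphere.
apply: (extreme _ _ (2^-1)) => //; last by apply/andP; split; lra.
  exact: SZ_norm_le1 p_SZ g.
by rewrite /unit_ball /= x_sphere.
Qed.

Variable psi : Y -> R.
Hypothesis psi_supp : supp c0 D x psi.

Lemma supp_Aset (p : fam X) : Aset c0 x p -> psi (D p) = 1.
Proof.
move=> p_A; have : (D @` Aset c0 x) (D p) by exists p.
by rewrite -psi_supp.2 => -[].
Qed.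

Lemma supp_Aset_opp (b : fam X) : strictly_convex (X g) ->
  Aset c0 (- x) b -> psi (D b) = -1.
Proof.
move=> X_sc b_A; case: D_iso => D_sphere [_ D_onto].
have [p p_SZ Dp] : exists2 p, SZ c0 p & D p = - D b.
  by apply: D_onto; rewrite /unit_sphere /= normrN; exact: D_sphere _ b_A.1.
have p_A : Aset c0 x p by split => //; exact: Aset_opp_antipode Dp.
by rewrite -[psi (D b)]opprK -(functionalN psi_supp.1.1) -Dp supp_Aset.
Qed.

Variables (z : fam X) (g' : Γ).
Hypotheses (z_SZ : SZ c0 z) (g'_neq : g' <> g) (z_g' : `|z g'| = 1).

Definition slice (v : X g) : R := psi (D (fupd z v)).

Let fupd_Aset (v : X g) : `|v| <= 1 -> Aset c0 (z g') (fupd z v).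
Proof.
move=> v1; split; last by rewrite fupd_neq.
by apply: (fupd_SZ (g1 := g')); rewrite ?fupd_neq.
Qed.

Lemma slice_affine (v w : X g) (t : R) : `|v| <= 1 -> `|w| <= 1 -> 0 <= t <= 1 ->
  slice (t *: v + (1 - t) *: w) = t * slice v + (1 - t) * slice w.
Proof.
move=> v1 w1 t01; rewrite /slice -fupd_comb.
rewrite (D_affine z_g' (fupd_Aset v1) (fupd_Aset w1) t01).
by rewrite (functionalD psi_supp.1.1) !(functionalZ psi_supp.1.1).
Qed.

Lemma slice_lipschitz (v w : X g) : `|v| <= 1 -> `|w| <= 1 ->
  `|slice v - slice w| <= `|v - w|.
Proof.
move=> v1 w1; case: D_iso => _ [D_dist _].
rewrite /slice -(functionalB psi_supp.1.1).
apply: le_trans (dual_sphere_le_norm psi_supp.1 _) _.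
rewrite D_dist; [|exact: (fupd_Aset v1).1 | exact: (fupd_Aset w1).1].
rewrite (znorm_fsub_single (γ := g)) ?fupd_eq //.
by move=> g0 g0g; rewrite !fupd_neq.
Qed.

Lemma slice_dual_extension : strictly_convex (X g) ->
  exists f : X g -> R, [/\ dual_sphere f, f x = 1 &
    forall v, `|v| <= 1 -> f v = slice v].
Proof.
move=> X_sc; have x1 : `|x| <= 1 by rewrite x_sphere.
have nx1 : `|- x| <= 1 by rewrite normrN x_sphere.
have slice_x : slice x = 1.
  by apply: supp_Aset; split; [exact: (fupd_Aset x1).1 | exact: fupd_eq].
have slice_nx : slice (- x) = -1.
  by apply: supp_Aset_opp => //; split; [exact: (fupd_Aset nx1).1 | exact: fupd_eq].
have slice0 : slice 0 = 0.
  have := slice_affine x1 nx1 (half_itv R).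
  by rewrite onem_half scalerN addrN slice_x slice_nx => ->; lra.
have slice_le_norm v : `|v| <= 1 -> `|slice v| <= `|v|.
  have ball0 : `|0 : X g| <= 1 by rewrite normr0.
  by move=> v1; have := slice_lipschitz v1 ball0; rewrite slice0 !subr0.
have ext_slice := ball_extE slice_affine slice0.
exists (ball_ext slice); split=> //; last by rewrite ext_slice.
exact: (ball_ext_dual_sphere slice_affine slice0 slice_le_norm x_sphere slice_x).
Qed.

End SphereIsometry.

Theorem proposition3p1 (R : realType) (Γ : Type)
  (X : Γ -> completeNormedModType R) (c0 : bool)
  (Y : completeNormedModType R) (D : fam X -> Y) :
  (exists g1 g2 : Γ, g1 <> g2) ->
  (forall g, strictly_convex (X g)) ->
  (forall g, dim_ge2 (X g)) ->
  (forall g, unit_sphere (X g) `<=` closure (Sm (X g))) ->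
  surj_isometry_spheres c0 D ->
  (forall g (x : X g), unit_sphere (X g) x -> affine_on_A c0 D x) ->
  forall (g : Γ) (x : X g), Sm (X g) x ->
  forall phi : X g -> R, dual_sphere phi -> phi x = 1 ->
  forall psi : Y -> R, supp c0 D x psi ->
  forall z : fam X, SZ c0 z ->
  (exists2 g', g' <> g & `|z g'| = 1) ->
  psi (D z) = phi (z g).
Proof.
move=> _ X_sc _ _ D_iso D_affine g x x_Sm phi phi_dual phi_x psi psi_supp
  z z_SZ [g' g'_neq z_g'].
have x_sphere : `|x| = 1 by case: x_Sm.
have [f [f_dual f_x f_slice]] := slice_dual_extension D_iso D_affine x_sphere
  psi_supp z_SZ g'_neq z_g' (X_sc g).
rewrite (smooth_point_dual_uniq x_Sm phi_dual phi_x f_dual f_x).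
by rewrite f_slice ?(SZ_norm_le1 z_SZ) // /slice fupd_id.
Qed.
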